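(* For $n\ge 0$ let $s_n=\sum_{r=0}^{n}1/r!$ be the $n$th partial sum of the Taylor series $e=\sum_{r\ge 0}1/r!$. For every $n\ge 0$, at most two of the three numbers $s_n, s_{n+1}, s_{n+2}$ are convergents of the simple continued fraction expansion of $e$.
   Context: The convergents of $e$ are the rationals obtained by truncating the simple continued fraction expansion of $e$; a partial sum $s_n$ ''is a convergent'' if it equals one of these rationals. *)

From HB Require Import structures.
From mathcomp Require Import all_boot all_order all_algebra.
From mathcomp Require Import all_classical all_reals all_analysis.
Set Implicit Arguments. Unset Strict Implicit. Unset Printing Implicit Defensive.
Import Order.TTheory GRing.Theory Num.Theory.
Local Open Scope ring_scope.

Fixpoint cf_rem {R : realType} (x : R) (k : nat) : R :=
  match k with
  | 0%N => x
  | k'.+1 => (cf_rem x k' - (Num.floor (cf_rem x k'))%:~R)^-1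
  end.

Definition cf_digit {R : realType} (x : R) (k : nat) : int :=
  Num.floor (cf_rem x k).

(* ((p_{k-1}, q_{k-1}), (p_k, q_k)) with p_{-1} = 1, q_{-1} = 0,
   p_0 = a_0, q_0 = 1, p_{k+1} = a_{k+1} p_k + p_{k-1}, same for q. *)
Fixpoint cf_pq {R : realType} (x : R) (k : nat) : (int * int) * (int * int) :=
  match k with
  | 0%N => ((1, 0), (cf_digit x 0, 1))
  | k'.+1 =>
      let: ((pp, qp), (p, q)) := cf_pq x k' in
      let a := cf_digit x k in
      ((p, q), (a * p + pp, a * q + qp))
  end.

Definition cf_convergent {R : realType} (x : R) (k : nat) : R :=
  let: (_, (p, q)) := cf_pq x k in p%:~R / q%:~R.

Definition is_convergent {R : realType} (x y : R) : Prop :=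
  exists k : nat, y = cf_convergent x k.

Definition e_partial_sum {R : realType} (n : nat) : R :=
  \sum_(r < n.+1) (r`!%:R)^-1.

(* If s_n = p/q is a convergent p_k/q_k of the irrational number e, then
   |e - p/q| < 1/(q (q + q_{k-1})), while e - s_n > (n+3)/(n+2)!, so
   q^2 < (n+1)!.  Writing s_n = N_n/n!, the denominator q is a multiple of
   n!/g_n with g_n = gcd(N_n, n!), hence n! < g_n^2 (n+1).  The recursion
   N_{n+1} = (n+1) N_n + 1 makes g_n, g_{n+1}, g_{n+2} nearly coprime divisors
   of (n+1)!, so g_n g_{n+1} g_{n+2} <= (n+1)! (n+3); multiplying the three
   bounds gives n! < (n+3)^3 (n+1), false for n >= 8.  The cases n < 8 are
   checked directly. *)

From mathcomp Require Import all_boot all_order all_algebra.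
From mathcomp Require Import all_classical all_reals all_analysis.
From mathcomp Require Import lra zify ring.
Set Implicit Arguments. Unset Strict Implicit. Unset Printing Implicit Defensive.
Import Order.TTheory GRing.Theory Num.Theory.

(* The numerator N_n of s_n = N_n / n!. *)
Fixpoint e_num (n : nat) : nat :=
  if n is k.+1 then k.+1 * e_num k + 1 else 1.

Definition e_gcd (n : nat) : nat := gcdn (e_num n) n`!.

(* What a convergent p_k/q_k of e equal to s_n tells about q = q_k and
   c = q_{k-1}. *)
Definition conv_denom_spec (n q c : nat) : Prop :=
  [/\ 0 < q, (q == 1) || (0 < c), n`! %| e_num n * q
    & q * (q + c) * n.+3 < n.+2`!].

Lemma coprime_e_numS n : coprime (e_num n) (e_num n.+1).
Proof. by rewrite /coprime /= gcdnMDl gcdn1. Qed.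

Lemma coprime_succ_e_num n : coprime n.+1 (e_num n.+1).
Proof. by rewrite /coprime /= mulnC gcdnMDl gcdn1. Qed.

Lemma gcdn_e_numSS_dvd n : gcdn (e_num n) (e_num n.+2) %| n.+3.
Proof.
have -> : e_num n.+2 = n.+2 * n.+1 * e_num n + n.+3 by rewrite /=; ring.
by rewrite gcdnMDl dvdn_gcdr.
Qed.

Lemma e_gcd_dvd_fact n : e_gcd n %| n`!.
Proof. exact: dvdn_gcdr. Qed.

Lemma e_gcdS_dvd_fact n : e_gcd n.+1 %| n`!.
Proof.
have : e_gcd n.+1 %| n.+1 * n`! by rewrite -factS dvdn_gcdr.
rewrite Gauss_dvdr // coprime_sym.
exact: coprime_dvdr (dvdn_gcdl _ _) (coprime_succ_e_num n).
Qed.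

Lemma e_gcd_prod3_le n : e_gcd n * e_gcd n.+1 * e_gcd n.+2 <= n.+1`! * n.+3.
Proof.
have g0N : e_gcd n %| e_num n := dvdn_gcdl _ _.
have g1N : e_gcd n.+1 %| e_num n.+1 := dvdn_gcdl _ _.
have g2N : e_gcd n.+2 %| e_num n.+2 := dvdn_gcdl _ _.
have c01 : coprime (e_gcd n) (e_gcd n.+1).
  exact: coprime_dvdl g0N (coprime_dvdr g1N (coprime_e_numS n)).
have c21 : coprime (e_gcd n.+2) (e_gcd n.+1).
  rewrite coprime_sym; exact: coprime_dvdl g1N (coprime_dvdr g2N (coprime_e_numS _)).
have g01F : e_gcd n * e_gcd n.+1 %| n.+1`!.
  by rewrite factS dvdn_mull // Gauss_dvd // e_gcd_dvd_fact e_gcdS_dvd_fact.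
have g012 : gcdn (e_gcd n * e_gcd n.+1) (e_gcd n.+2) %| n.+3.
  rewrite gcdnC Gauss_gcdl // gcdnC; apply: dvdn_trans (gcdn_e_numSS_dvd n).
  by rewrite dvdn_gcd (dvdn_trans (dvdn_gcdl _ _) g0N) (dvdn_trans (dvdn_gcdr _ _) g2N).
rewrite -muln_lcm_gcd; apply: leq_mul; apply: dvdn_leq => //.
  exact: fact_gt0.
by rewrite dvdn_lcm g01F e_gcdS_dvd_fact.
Qed.

Lemma fact_le_e_gcd_mul n q c : conv_denom_spec n q c -> n`! <= e_gcd n * q.
Proof.
case=> q0 _ dvd_q _; apply: dvdn_leq; first by rewrite muln_gt0 q0 gcdn_gt0 fact_gt0 orbT.
by rewrite muln_gcdl dvdn_gcd dvd_q dvdn_mulr.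
Qed.

Lemma conv_denom_sq_lt n q c : conv_denom_spec n q c -> q * q < n.+1`!.
Proof.
case=> _ _ _; rewrite [n.+2`!]factS [n.+2 * _]mulnC => lt_q.
rewrite -(ltn_pmul2r (ltn0Sn n.+1)); apply: leq_ltn_trans lt_q.
by rewrite leq_mul // leq_mul2l leq_addr orbT.
Qed.

Lemma conv_denom_fact_lt n q c : conv_denom_spec n q c -> n`! < e_gcd n ^ 2 * n.+1.
Proof.
move=> Hq; have le_F := fact_le_e_gcd_mul Hq; have lt_qq := conv_denom_sq_lt Hq.
rewrite -(ltn_pmul2r (fact_gt0 n)) -mulnA -factS.
apply: (leq_ltn_trans (leq_mul le_F le_F)).
by rewrite mulnACA mulnn ltn_pmul2l // expn_gt0 gcdn_gt0 fact_gt0 orbT.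
Qed.

Lemma no_conv_denom_spec2 q c : ~ conv_denom_spec 2 q c.
Proof.
case=> q0 /orP q_c /dvdnP [k]; rewrite (_ : e_num 2 = 5) // (_ : 2`! = 2) // => e5 lt_q.
case: q_c => [/eqP q1 | c0]; first by move: e5; rewrite q1; lia.
have q2 : 2 <= q by lia.
move: lt_q; rewrite (_ : 4`! = 24) //; nia.
Qed.

Lemma no_conv_denom_spec_small n q c : n \in [:: 0; 4; 5; 7] -> ~ conv_denom_spec n q c.
Proof.
move=> n_small /conv_denom_fact_lt; apply/negP; rewrite -leqNgt.
by move: n_small; rewrite !inE => /or4P [] /eqP ->.
Qed.

Lemma fact_ge_cube n : 8 <= n -> n.+3 ^ 3 * n.+1 <= n`!.
Proof.
move=> /subnK <-; elim: (n - 8) => [//|k IH].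
rewrite addSn factS; apply: leq_trans (leq_mul (leqnn _) IH); nia.
Qed.

Lemma no_conv_denom_spec3 n q0 c0 q1 c1 q2 c2 : 8 <= n ->
  conv_denom_spec n q0 c0 -> conv_denom_spec n.+1 q1 c1 ->
  conv_denom_spec n.+2 q2 c2 -> False.
Proof.
move=> n8 /conv_denom_fact_lt H0 /conv_denom_fact_lt H1 /conv_denom_fact_lt H2.
have := leq_mul (e_gcd_prod3_le n) (e_gcd_prod3_le n).
have := ltn_mul (ltn_mul H0 H1) H2.
have := fact_ge_cube n8.
rewrite [n.+2`!]factS; set F := n`!; set F1 := n.+1`!.
set g0 := e_gcd n; set g1 := e_gcd n.+1; set g2 := e_gcd n.+2 => big lt_prod le_g.
have F1pos : 0 < F1 * F1 * n.+2 by rewrite !muln_gt0 fact_gt0.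
suff : F * (F1 * F1 * n.+2) < n.+3 ^ 3 * n.+1 * (F1 * F1 * n.+2).
  by rewrite ltn_pmul2r // ltnNge big.
have -> : F * (F1 * F1 * n.+2) = F * F1 * (n.+2 * F1) by ring.
apply: (leq_trans lt_prod).
have -> : g0 ^ 2 * n.+1 * (g1 ^ 2 * n.+2) * (g2 ^ 2 * n.+3) =
  (g0 * g1 * g2) * (g0 * g1 * g2) * (n.+1 * n.+2 * n.+3) by ring.
apply: leq_trans (leq_mul le_g (leqnn _)) _; apply: eq_leq; ring.
Qed.

Local Open Scope ring_scope.

Section ContinuedFraction.
Variable R : realType.

Lemma irrational_neq_int (z : R) (m : int) : irrational z -> z != m%:~R.
Proof. by move=> z_irr; apply/eqP => zm; apply: z_irr; exists m%:~R; rewrite // ratr_int. Qed.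

Lemma irrational_frac_gt0_lt1 (z : R) :
  irrational z -> 0 < z - (Num.floor z)%:~R < 1.
Proof.
move=> /irrational_neq_int z_irr; have /andP[fl_le lt_fl] := floor_itv z.
rewrite subr_gt0 lt_neqAle eq_sym z_irr fl_le /=.
by rewrite ltrBlDr addrC -[1]/(1%:~R) -intrD.
Qed.

Lemma irrational_inv_subz (z : R) (m : int) :
  irrational z -> irrational (z - m%:~R)^-1.
Proof.
move=> z_irr [r _ rE]; apply: z_irr; exists (m%:~R + r^-1) => //.
by rewrite rmorphD /= ratr_int fmorphV /= rE invrK addrC subrK.
Qed.

Variable x : R.
Hypothesis x_irr : irrational x.

Lemma irrational_cf_rem k : irrational (cf_rem x k).
Proof. by elim: k => //= k IH; exact: irrational_inv_subz. Qed.

Lemma cf_rem_gt1 k : 1 < cf_rem x k.+1.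
Proof.
have /andP[frac_gt0 frac_lt1] := irrational_frac_gt0_lt1 (@irrational_cf_rem k).
by rewrite /= invf_gt1.
Qed.

Lemma cf_digit_ge1 k : 1 <= cf_digit x k.+1.
Proof. by rewrite /cf_digit floor_ge_int ltW // cf_rem_gt1. Qed.

Lemma cf_rem_mul_next k :
  cf_rem x k * cf_rem x k.+1 = (cf_digit x k)%:~R * cf_rem x k.+1 + 1.
Proof.
have : cf_rem x k - (cf_digit x k)%:~R != 0.
  by rewrite subr_eq0; apply: irrational_neq_int; exact: irrational_cf_rem.
rewrite /= -/(cf_digit x k) => nz.
by rewrite -{1}(subrK (cf_digit x k)%:~R (cf_rem x k)) mulrDl mulfV // addrC.
Qed.

Lemma cf_pq_invariant k :
  let: ((pp, qp), (p, q)) := cf_pq x k in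
  [/\ (p * qp - pp * q = 1) \/ (p * qp - pp * q = -1),
      x * (q%:~R * cf_rem x k.+1 + qp%:~R) = p%:~R * cf_rem x k.+1 + pp%:~R,
      1 <= q, 0 <= qp & (q == 1) || (1 <= qp)].
Proof.
elim: k => [|k IH].
  rewrite [cf_pq x 0]/=; cbv beta iota; rewrite addr0 !mulr1z mul1r.
  have := cf_rem_mul_next 0; rewrite [cf_rem x 0]/= => <-.
  by split=> //; [right; rewrite mulr0 sub0r | rewrite mul1r].
rewrite [cf_pq x k.+1]/=.
case: (cf_pq x k) IH => [[pp qp] [p q]] [det rel q_ge1 qp_ge0 _].
have a_ge1 := cf_digit_ge1 k.
have rem_eq := cf_rem_mul_next k.+1.
set a := cf_digit x k.+1 in a_ge1 rem_eq *; set y := cf_rem x k.+2 in rem_eq *.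
split; [| | lia | lia | by rewrite q_ge1 orbT].
- by case: det => det; [right; rewrite -det | left; rewrite -[1]opprK -det]; ring.
- have -> : (a * q + qp)%:~R * y + q%:~R = (q%:~R * cf_rem x k.+1 + qp%:~R) * y.
    by rewrite mulrDl -mulrA rem_eq intrD intrM; ring.
  have -> : (a * p + pp)%:~R * y + p%:~R = (p%:~R * cf_rem x k.+1 + pp%:~R) * y.
    by rewrite mulrDl -mulrA rem_eq intrD intrM; ring.
  by rewrite mulrA rel.
Qed.

Lemma cf_convergent_approx k : exists (p : int) (q c : nat),
  [/\ cf_convergent x k = p%:~R / q%:R, (0 < q)%N, (q == 1)%N || (0 < c)%N
    & `|x - p%:~R / q%:R| * (q * (q + c))%:R < 1].
Proof.
have := cf_pq_invariant k; rewrite /cf_convergent.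
case: (cf_pq x k) => [[pp qp] [p q]] [det rel].
case: q det rel => [q|//] det rel q_ge1.
case: qp det rel => [c|//] det rel _ q_c.
exists p, q, c; split=> //.
have y_gt1 := cf_rem_gt1 k; set y := cf_rem x k.+1 in rel y_gt1.
rewrite -!pmulrn in rel.
have q_gt0 : 0 < q%:R :> R by rewrite ltr0n; lia.
have D_gt : q%:R + c%:R < q%:R * y + c%:R :> R.
  by rewrite ltrD2r -[X in X < _]mulr1 ltr_pM2l.
have err_eq : (x * q%:R - p%:~R) * (q%:R * y + c%:R) = (pp * q - p * c)%:~R :> R.
  have -> : (x * q%:R - p%:~R) * (q%:R * y + c%:R) =
            q%:R * (x * (q%:R * y + c%:R)) - p%:~R * (q%:R * y + c%:R) by ring.
  by rewrite rel intrB !intrM -!pmulrn; ring.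
have err_norm : `|x * q%:R - p%:~R| * (q%:R * y + c%:R) = 1 :> R.
  have D_ge0 : 0 <= q%:R * y + c%:R :> R by rewrite (le_trans _ (ltW D_gt)) // addr_ge0.
  rewrite -[X in _ * X](ger0_norm D_ge0) -normrM err_eq.
  by rewrite -opprB intrN normrN; case: det => ->; rewrite ?normrN normr1.
have err_gt0 : 0 < `|x * q%:R - p%:~R| :> R.
  rewrite normr_gt0; apply/eqP => err0.
  by move: err_norm; rewrite err0 normr0 mul0r => /eqP; rewrite eq_sym oner_eq0.
have -> : x - p%:~R / q%:R = (x * q%:R - p%:~R) / q%:R.
  by rewrite mulrBl mulfK // gt_eqF.
rewrite normrM normfV (gtr0_norm q_gt0) natrM natrD mulrA divfK ?gt_eqF //.
by rewrite -[X in _ < X]err_norm ltr_pM2l.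
Qed.

End ContinuedFraction.

Section PartialSums.
Variable R : realType.
Local Notation s := (@e_partial_sum R).

Lemma fact_gt0R n : 0 < n`!%:R :> R.
Proof. by rewrite ltr0n fact_gt0. Qed.

Lemma e_partial_sumS n : s n.+1 = s n + (n.+1`!%:R)^-1.
Proof. by rewrite /e_partial_sum big_ord_recr. Qed.

Lemma e_partial_sumE n : s n = (e_num n)%:R / n`!%:R.
Proof.
elim: n => [|n IH]; first by rewrite /e_partial_sum big_ord1 /= divr1 invr1.
rewrite e_partial_sumS IH /= factS natrD !natrM.
by field; rewrite !gt_eqF ?fact_gt0R ?ltr0n.
Qed.

Lemma e_partial_sum_series n : s n = series (exp_coeff 1) n.+1.
Proof.
rewrite /e_partial_sum /series /= big_mkord; apply: eq_bigr => i _.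
by rewrite /exp_coeff /= expr1n mul1r.
Qed.

Lemma nondecreasing_series_exp_coeff1 :
  {homo series (exp_coeff (1 : R)) : n m / (n <= m)%N >-> n <= m}.
Proof. by apply: nondecreasing_series => k _ _; rewrite exp_coeff_ge0. Qed.

Lemma e_partial_sum_le_expR1 n : s n <= expR 1.
Proof.
rewrite e_partial_sum_series.
exact: nondecreasing_cvgn_le nondecreasing_series_exp_coeff1 (is_cvg_series_exp_coeff _) _.
Qed.

Lemma expR1_sub_e_partial_sum_ge n : n.+3%:R / n.+2`!%:R <= expR 1 - s n.
Proof.
have := e_partial_sum_le_expR1 n.+2; rewrite !e_partial_sumS.
have -> : n.+3%:R / n.+2`!%:R = (n.+1`!%:R)^-1 + (n.+2`!%:R)^-1 :> R.
  rewrite [n.+2`!]factS natrM -addn1 natrD.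
  by field; rewrite !gt_eqF ?fact_gt0R ?ltr0n.
lra.
Qed.

Lemma e_partial_sum_tail_step m :
  s m.+1 + 2 / m.+2`!%:R <= s m + 2 / m.+1`!%:R.
Proof.
rewrite e_partial_sumS -addrA lerD2l [m.+2`!]factS natrM invfM mulrA.
have f_gt0 := fact_gt0R m.+1; set f := m.+1`!%:R in f_gt0 *.
rewrite [2 / f]mulr_natl [f^-1 *+ 2]mulr2n lerD2l ler_piMl ?invr_ge0 ?(ltW f_gt0) //.
by rewrite ler_pdivrMr ?ltr0n // mul1r ler_nat.
Qed.

Lemma expR1_le_e_partial_sum n : expR 1 <= s n + 2 / n.+1`!%:R.
Proof.
have tail k : s (n + k) + 2 / (n + k).+1`!%:R <= s n + 2 / n.+1`!%:R.
  elim: k => [|k IH]; first by rewrite addn0.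
  by apply: le_trans IH; rewrite addnS e_partial_sum_tail_step.
apply: limr_le; first exact: is_cvg_series_exp_coeff.
apply: nearW => m; apply: le_trans (tail m).
have le_m : (m <= (n + m).+1)%N by rewrite leqW // leq_addl.
apply: le_trans (nondecreasing_series_exp_coeff1 le_m) _.
by rewrite -e_partial_sum_series lerDl divr_ge0 // ltW // fact_gt0R.
Qed.

Lemma expR1_irrational : irrational (expR 1 : R).
Proof.
move=> /rationalP [a [b e_ab]].
have b_gt0 : (0 < b)%N.
  by rewrite lt0n; apply/eqP => b0; move: (expR_gt0 (1 : R)); rewrite e_ab b0 invr0 mulr0 ltxx.
set n := b.+1.
have [k fact_eq] : exists k, n`! = (k * b)%N by apply/dvdnP; rewrite dvdn_fact // b_gt0 leqnSn.
have k_gt0 : (0 < k)%N by move: (fact_gt0 n); rewrite fact_eq muln_gt0 => /andP[].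
set z : int := k%:Z * a - (e_num n)%:Z.
have z_eq : n`!%:R * (expR 1 - s n) = z%:~R.
  rewrite /z intrB intrM e_partial_sumE e_ab fact_eq natrM -!pmulrn.
  by field; rewrite !gt_eqF ?ltr0n.
have z_gt0 : 0 < z%:~R :> R.
  have lb_gt0 : 0 < n.+3%:R / n.+2`!%:R :> R by rewrite divr_gt0 ?fact_gt0R ?ltr0n.
  by rewrite -z_eq mulr_gt0 ?fact_gt0R // (lt_le_trans lb_gt0 (expR1_sub_e_partial_sum_ge n)).
have z_lt1 : z%:~R < 1 :> R.
  rewrite -z_eq; apply: (le_lt_trans (y := n`!%:R * (2 / n.+1`!%:R))).
    by rewrite ler_pM2l ?fact_gt0R // lerBlDl expR1_le_e_partial_sum.
  have -> : n`!%:R * (2 / n.+1`!%:R) = 2 / n.+1%:R :> R.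
    by rewrite factS natrM; field; rewrite !gt_eqF ?fact_gt0R ?ltr0n.
  by rewrite ltr_pdivrMr ?ltr0n // mul1r ltr_nat /n ltnS ltnS.
by move: z_gt0 z_lt1; rewrite ltr0z -[1]/(1%:~R) ltr_int; lia.
Qed.

End PartialSums.

Lemma conv_denom_spec_of_convergent (R : realType) n :
  is_convergent (expR 1 : R) (e_partial_sum n) -> exists q c, conv_denom_spec n q c.
Proof.
move=> [k conv_k].
have [p [q [c [conv_eq q_gt0 q_c approx]]]] := cf_convergent_approx (@expR1_irrational R) k.
rewrite -conv_eq -conv_k in approx; rewrite conv_eq e_partial_sumE in conv_k.
exists q, c; split=> //.
- have /eqP : (e_num n * q)%:R = (p * n`!)%:~R :> R.
    have q_neq0 : q%:R != 0 :> R by rewrite pnatr_eq0 -lt0n.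
    have F_neq0 : n`!%:R != 0 :> R by rewrite pnatr_eq0 -lt0n fact_gt0.
    by move/eqP: conv_k; rewrite eqr_div // natrM intrM -pmulrn => /eqP.
  rewrite pmulrn eqr_int => /eqP eq_Nq.
  by have := dvdz_mull p (dvdzz n`!); rewrite -eq_Nq.
- have lb := expR1_sub_e_partial_sum_ge R n.
  rewrite -(ltr_nat R) natrM -[X in _ < X]mul1r -ltr_pdivrMr ?fact_gt0R // -mulrA.
  apply: le_lt_trans approx; rewrite mulrC; apply: ler_wpM2r => //.
  exact: le_trans lb (ler_norm _).
Qed.

Theorem theorem3p1 (R : realType) (n : nat) :
  ~ [/\ is_convergent (expR 1 : R) (e_partial_sum n),
        is_convergent (expR 1 : R) (e_partial_sum n.+1)
      & is_convergent (expR 1 : R) (e_partial_sum n.+2)].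
Proof.
case=> /conv_denom_spec_of_convergent [q0 [c0 H0]] /conv_denom_spec_of_convergent [q1 [c1 H1]]
  /conv_denom_spec_of_convergent [q2 [c2 H2]].
have [n_ge8 | n_lt8] := leqP 8 n; first exact: no_conv_denom_spec3 n_ge8 H0 H1 H2.
case: n n_lt8 H0 H1 H2 => [|[|[|[|[|[|[|[|//]]]]]]]] _ H0 H1 H2.
- exact: no_conv_denom_spec_small H0.
- exact: no_conv_denom_spec2 H1.
- exact: no_conv_denom_spec_small H2.
- exact: no_conv_denom_spec_small H1.
- exact: no_conv_denom_spec_small H0.
- exact: no_conv_denom_spec_small H0.
- exact: no_conv_denom_spec_small H1.
- exact: no_conv_denom_spec_small H0.
Qed.
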